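(* Let $\mathcal{G}=(\mathcal{V},\mathcal{A})$ be the information-flow graph of a single-sender single-uniprior index-coding instance with message lengths $q_1,\dots,q_n$. Then \[ \ell^*(\mathcal{G}) \geq \sum_{k \in \mathcal{V}} q_k - \sum_{i \in \mathcal{L}(\mathcal{G})} q_i - \sum_{\mathcal{V}_{S} \in \mathbb{V}} \min_{a \in \mathcal{V}_{S}} q_a, \] where $\mathbb{V}$ is the set of vertex sets of all leaf SCCs of $\mathcal{G}$.
   Context: Single-sender single-uniprior index coding: there are $n$ receivers and $n$ independent messages $x_1,\dots,x_n$; message $x_i$ consists of $q_i\ge 1$ bits, each independently uniformly distributed on $\{0,1\}$. A single sender knows all messages. Receiver $i$ knows $x_i$ a priori and requests a set $\mathcal{W}_i$ of messages with $x_i\notin\mathcal{W}_i$. The information-flow graph is the directed graph $\mathcal{G}=(\mathcal{V},\mathcal{A})$ with $\mathcal{V}=\{1,\dots,n\}$ and an arc $(j\to i)\in\mathcal{A}$ iff $x_j\in\mathcal{W}_i$. An index code of length $\ell$ consists of an encoding function $E:\{0,1\}^{\sum_i q_i}\to\{0,1\}^\ell$ and, for each receiver $i$, a decoding function $D_i$ such that $D_i(E(x_1,\dots,x_n),x_i)$ equals the tuple of messages in $\mathcal{W}_i$ for all values of the messages. $\ell^*(\mathcal{G})$ denotes the minimum length of an index code. A leaf vertex is a vertex with no outgoing arcs; $\mathcal{L}(\mathcal{G})$ is the set of leaf vertices. A strongly connected component (SCC) is a maximal subgraph in which every ordered pair of vertices is joined by a directed path inside the subgraph. A leaf SCC is an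 SCC with at least two vertices from which no arc goes to a vertex outside the SCC. *)

From mathcomp Require Import all_boot.
Set Implicit Arguments. Unset Strict Implicit. Unset Printing Implicit Defensive.

Section IndexCoding.
Variables (n : nat) (q : 'I_n -> nat) (W : 'I_n -> {set 'I_n}).

Definition messages := forall i : 'I_n, (q i).-tuple bool.

Definition index_code (l : nat) : Prop :=
  exists (E : messages -> l.-tuple bool)
         (D : forall i j : 'I_n, l.-tuple bool -> (q i).-tuple bool -> (q j).-tuple bool),
    forall (x : messages) (i j : 'I_n), j \in W i -> D i j (E x) (x i) = x j.

Definition arc : rel 'I_n := fun j i => j \in W i.

Definition leaves : {set 'I_n} := [set i | [forall k, ~~ arc i k]].

Definition scc (v : 'I_n) : {set 'I_n} :=
  [set u | connect arc v u && connect arc u v].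

Definition leaf_sccs : {set {set 'I_n}} :=
  [set S : {set 'I_n} | [&& [exists v, S == scc v], 1 < #|S|
                          & [forall u in S, forall w, arc u w ==> (w \in S)]]].

(* min_{a in S} q_a (for nonempty S; the neutral element is the max over S) *)
Definition maxq (S : {set 'I_n}) : nat := \max_(a in S) q a.
Definition minq (S : {set 'I_n}) : nat := \big[minn/maxq S]_(a in S) q a.

End IndexCoding.

From Pilot Require Import Defs.
From mathcomp Require Import all_boot.
Set Implicit Arguments. Unset Strict Implicit. Unset Printing Implicit Defensive.

(* Every vertex reaches a terminal strongly connected component, which is either
   a leaf or a leaf SCC.  Let R consist of the leaves together with one vertex of
   minimal message length in each leaf SCC.  Decoding backwards along a path into R
   shows that the codeword and the messages on R determine all messages, so once
   the messages on R are fixed the encoder is injective on the remaining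
   2^(sum of q_k, k not in R) message profiles. *)

Lemma connect_to_terminal (T : finType) (e : rel T) (j : T) :
  exists2 u, connect e j u & forall w, connect e u w -> connect e w u.
Proof.
pose reach u := [set w | connect e u w].
have [u ju u_min] := @arg_minnP _ j (connect e j) (fun u => #|reach u|) (connect0 e j).
exists u => // w uw.
have sub_wu : reach w \subset reach u.
  by apply/subsetP => z; rewrite !inE; apply: connect_trans.
have card_wu : #|reach w| = #|reach u|.
  apply/eqP; rewrite eqn_leq subset_leq_card //=.
  exact/u_min/(connect_trans ju uw).
by have := subset_cardP card_wu sub_wu u; rewrite !inE connect0.
Qed.

Lemma leq_sum_setU (I : finType) (F : I -> nat) (A B : {set I}) :
  \sum_(i in A :|: B) F i <= \sum_(i in A) F i + \sum_(i in B) F i.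
Proof.
rewrite big_mkcond [X in _ <= X + _]big_mkcond [X in _ <= _ + X]big_mkcond.
rewrite -big_split /=; apply: leq_sum => i _; rewrite inE.
by case: (i \in A); case: (i \in B); rewrite ?addn0 ?leq_addr.
Qed.

Section IndexCodingBound.
Variables (n : nat) (q : 'I_n -> nat) (W : 'I_n -> {set 'I_n}).
Hypothesis hW : forall i, i \notin W i.

Lemma sum_q_le_code_length (A : {set 'I_n}) l (E : messages q -> l.-tuple bool) :
  (forall x y : messages q, (forall i, i \in A -> x i = y i) ->
     E x = E y -> forall i, x i = y i) ->
  \sum_(i | i \notin A) q i <= l.
Proof.
move=> E_inj; pose x0 : messages q := fun i => [tuple false | _ < q i].
pose F i : pred ((q i).-tuple bool) := if i \in A then pred1 (x0 i) else predT.
pose profiles := (family F : simpl_pred {dffun forall i, (q i).-tuple bool}).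
have card_profiles : #|profiles| = 2 ^ \sum_(i | i \notin A) q i.
  rewrite card_family foldrE big_image /= expn_sum [RHS]big_mkcond /=.
  apply: eq_bigr => i _; rewrite /F; case: (i \in A) => /=; first exact: card1.
  by rewrite (eq_card (B := {: (q i).-tuple bool})) // card_tuple card_bool.
have E_inj_profiles : {in profiles &,
    injective (fun f : {dffun forall i, (q i).-tuple bool} => E (fun i => f i))}.
  move=> f g /familyP f_fam /familyP g_fam Efg; apply/ffunP => i.
  apply: E_inj Efg i => {}i iA.
  by move: (f_fam i) (g_fam i); rewrite /F iA !inE => /eqP-> /eqP->.
have := leq_card_in _ _ E_inj_profiles.
by rewrite card_profiles card_tuple card_bool leq_exp2l.
Qed.

Lemma decode_along_path l (E : messages q -> l.-tuple bool)
    (D : forall i j : 'I_n, l.-tuple bool -> (q i).-tuple bool -> (q j).-tuple bool) :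
  (forall (x : messages q) (i j : 'I_n), j \in W i -> D i j (E x) (x i) = x j) ->
  forall (x y : messages q) (j r : 'I_n),
    E x = E y -> connect (Defs.arc W) j r -> x r = y r -> x j = y j.
Proof.
move=> HD x y j r Exy /connectP[p p_path ->] {r}.
elim: p j p_path => [|i p IH] j //= /andP[ji p_path] /(IH i p_path) xyi.
by rewrite -(HD x i j ji) -(HD y i j ji) Exy xyi.
Qed.

Lemma leaf_scc_eq_scc S a : S \in leaf_sccs W -> a \in S -> S = scc W a.
Proof.
rewrite inE => /and3P[/existsP[v /eqP->] _ _]; rewrite inE => /andP[va av].
apply/setP => u; rewrite !inE.
apply/andP/andP => -[h1 h2]; split.
- exact: connect_trans av h1.
- exact: connect_trans h2 va.
- exact: connect_trans va h1.
- exact: connect_trans h2 av.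
Qed.

Lemma terminal_scc_is_leaf_scc u :
  u \notin leaves W -> (forall w, connect (Defs.arc W) u w -> connect (Defs.arc W) w u) ->
  scc W u \in leaf_sccs W.
Proof.
rewrite inE negb_forall => /existsP[w]; rewrite negbK => uw back.
have uu : u \in scc W u by rewrite inE connect0.
have wu : w \in scc W u by rewrite inE connect1 // back // connect1.
rewrite inE; apply/and3P; split.
- by apply/existsP; exists u.
- have u_neq_w : u != w by move: uw; apply: contraTneq => ->; apply: hW.
  rewrite (cardsD1 u) uu ltnS card_gt0; apply/set0Pn.
  by exists w; rewrite in_setD1 eq_sym u_neq_w wu.
- apply/forall_inP => x; rewrite inE => /andP[ux _]; apply/forallP => y; apply/implyP => xy.
  have uy : connect (Defs.arc W) u y by apply: connect_trans ux (connect1 xy).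
  by rewrite inE uy back.
Qed.

Lemma leq_minq a (S : {set 'I_n}) :
  a \in S -> (forall b, b \in S -> q a <= q b) -> q a <= minq q S.
Proof.
move=> aS a_min; apply: (big_ind (fun m => q a <= m)) => //.
- exact: leq_bigmax_cond.
- by move=> x y ax ay; rewrite leq_min ax ay.
Qed.

Variable i0 : 'I_n.

Definition min_vertex (S : {set 'I_n}) : 'I_n :=
  if [pick a in S] is Some a0 then [arg min_(a < a0 in S) q a] else i0.

Lemma min_vertexP S :
  S != set0 -> min_vertex S \in S /\ q (min_vertex S) <= minq q S.
Proof.
rewrite /min_vertex; case: pickP => [a0 a0S _ | S0]; last first.
  by case/set0Pn => a; rewrite S0.
by case: arg_minnP => // a aS a_min; split; last exact: leq_minq.
Qed.

Definition decoding_roots : {set 'I_n} :=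
  leaves W :|: [set min_vertex S | S in leaf_sccs W].

Lemma leaf_scc_neq0 S : S \in leaf_sccs W -> S != set0.
Proof. by rewrite inE -card_gt0 => /and3P[_ /ltnW]. Qed.

Lemma sum_decoding_roots :
  \sum_(a in decoding_roots) q a <=
  \sum_(i in leaves W) q i + \sum_(S in leaf_sccs W) minq q S.
Proof.
apply: leq_trans (leq_sum_setU _ _ _) _; rewrite leq_add2l big_imset /=.
  by apply: leq_sum => S /leaf_scc_neq0/min_vertexP[].
move=> S S' SL S'L eqSS'.
have [mS _] := min_vertexP (leaf_scc_neq0 SL).
have [mS' _] := min_vertexP (leaf_scc_neq0 S'L).
by rewrite (leaf_scc_eq_scc SL mS) (leaf_scc_eq_scc S'L mS') eqSS'.
Qed.

Lemma connect_decoding_roots j :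
  exists2 r, r \in decoding_roots & connect (Defs.arc W) j r.
Proof.
have [u ju u_term] := connect_to_terminal (Defs.arc W) j.
have [uL | uNL] := boolP (u \in leaves W).
  by exists u; rewrite // inE uL.
have SL := terminal_scc_is_leaf_scc uNL u_term.
have [mS _] := min_vertexP (leaf_scc_neq0 SL).
exists (min_vertex (scc W u)); first by rewrite inE imset_f ?orbT.
by move: mS; rewrite inE => /andP[um _]; apply: connect_trans ju um.
Qed.

End IndexCodingBound.

Theorem theorem1 (n : nat) (q : 'I_n -> nat) (W : 'I_n -> {set 'I_n})
  (hq : forall i, 0 < q i) (hW : forall i, i \notin W i) (l : nat) :
  index_code q W l ->
  \sum_(k < n) q k - \sum_(i in leaves W) q i
    - \sum_(S in leaf_sccs W) minq q S <= l.
Proof.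
case: (posnP n) => [n0 | n_gt0]; first by subst n; rewrite big_ord0.
pose R := decoding_roots q W (Ordinal n_gt0).
move=> [E [D HD]].
have code_bound : \sum_(i | i \notin R) q i <= l.
  apply: (sum_q_le_code_length (E := E)) => x y xy_R Exy j.
  have [r rR jr] := connect_decoding_roots q hW (Ordinal n_gt0) j.
  exact: (decode_along_path HD Exy jr (xy_R r rR)).
rewrite -subnDA leq_subLR (bigID (mem R)) /=.
exact: leq_add (sum_decoding_roots _ _ _) code_bound.
Qed.
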